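(* The homomorphism $P\Gamma_L\to{\rm PGL}_2(7)$ is surjective.
   Context: Let $\mathcal{O}$ be the ring of integers of $\mathbb{Q}(\sqrt{-7})$, $\Gamma_L$ the unitary group of the standard Hermitian lattice $\mathcal{O}[\tfrac12]^3$, and $P\Gamma_L$ its quotient by scalars; a fixed embedding $\mathcal{O}\to\mathbb{Z}_2$ identifies $P\Gamma_L$ with a lattice in ${\rm PGL}_3(\mathbb{Q}_2)$. With $\theta=\sqrt{-7}$, the Hermitian form induces a nondegenerate symmetric bilinear form on $\mathcal{O}[\tfrac12]^3/\theta\mathcal{O}[\tfrac12]^3\cong\mathbb{F}_7^3$, yielding the homomorphism $P\Gamma_L\to{\rm PO}_3(7)\cong{\rm PGL}_2(7)$ in question. *)

From mathcomp Require Import all_boot all_order all_algebra all_field.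
Set Implicit Arguments. Unset Strict Implicit. Unset Printing Implicit Defensive.
Import Order.TTheory GRing.Theory Num.Theory.
Local Open Scope ring_scope.

(* alpha = (1 + sqrt(-7))/2, so O = Z[alpha] is the ring of integers of Q(sqrt -7)
   and theta = sqrt(-7) = 2 alpha - 1. *)
Definition alpha : algC := (1 + sqrtC (-7)) / 2.

Definition dyadic (q : rat) : Prop := exists k : nat, denq q = (2 ^ k)%:Z.

(* the reduction Z_(7) -> F_7 (used only on dyadic rationals) *)
Definition redQ7 (q : rat) : 'F_7 := (numq q)%:~R / (denq q)%:~R.

Definition in_Oh (x : algC) : Prop :=
  exists a b : rat, [/\ dyadic a, dyadic b & x = ratr a + ratr b * alpha].

(* reduction modulo theta = sqrt(-7): O[1/2]/theta O[1/2] = F_7, with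
   alpha |-> 1/2 = 4 (since 2 alpha = 1 + theta).  [reduces_to x y] says
   x is in O[1/2] and its reduction mod theta is y. *)
Definition reduces_to (x : algC) (y : 'F_7) : Prop :=
  exists a b : rat, [/\ dyadic a, dyadic b, x = ratr a + ratr b * alpha
                     & y = redQ7 a + 4 * redQ7 b].

(* Gamma_L: unitary group of the standard Hermitian lattice O[1/2]^3,
   h(x,y) = sum_i x_i conj(y_i): g has entries in O[1/2] and g^* g = 1
   (then g^{-1} = g^* also has entries in O[1/2]). *)
Definition Gamma_L (g : 'M[algC]_3) : Prop :=
  (forall i j, in_Oh (g i j)) /\ (map_mx (fun x => x^*) g)^T *m g = 1.

Definition O3_7 (g : 'M['F_7]_3) : Prop := g^T *m g = 1.

(* Reduction modulo [theta] is the ring morphism [O[1/2] -> F_7] sending [alpha] to 4,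
   the root of [X^2 - X + 2] in [F_7] matching [2 alpha = 1 + theta]. Hence the
   orthogonal matrices over [F_7] that are reductions of elements of [Gamma_L] form a
   monoid. It contains the reductions of four explicit elements of [Gamma_L] with
   entries in [O / 2]: two transpositions, [diag(-1, 1, 1)], and a lift of the matrix
   with rows [(2, 2, 0)], [(5, 2, 0)], [(0, 0, 1)] built from [alpha / 2] and
   [(1 - alpha) / 2]. An exhaustive enumeration shows that these generate all of
   [O_3(7)], so every element of [O_3(7)] lifts, already with scalar [c = 1]. *)

From mathcomp Require Import all_boot all_order all_algebra all_field.
From mathcomp Require Import ring.
Import GRing.Theory Num.Theory.
Set Implicit Arguments. Unset Strict Implicit. Unset Printing Implicit Defensive.
Local Open Scope ring_scope.

(* [(n, m)] codes [n + m alpha] in [Z[alpha]]; [zmul] uses [alpha^2 = alpha - 2] and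
   [zconj] uses [alpha^* = 1 - alpha]. *)
Definition zmul (z w : int * int) : int * int :=
  (z.1 * w.1 - 2 * z.2 * w.2, z.1 * w.2 + z.2 * w.1 + z.2 * w.2).

Definition zconj (z : int * int) : int * int := (z.1 + z.2, - z.2).

Section QuadraticEval.
Variables (R : comPzRingType) (r : R).

Definition zeval (z : int * int) : R := z.1%:~R + z.2%:~R * r.

Lemma zeval0 : zeval 0 = 0.
Proof. by rewrite /zeval /= !mulr0z mul0r addr0. Qed.

Lemma zevalD z w : zeval (z + w) = zeval z + zeval w.
Proof. by rewrite /zeval /= !intrD mulrDl addrACA. Qed.

Lemma zevalM : r ^+ 2 - r + 2 = 0 -> forall z w, zeval (zmul z w) = zeval z * zeval w.
Proof.
move=> root_r z w; apply/eqP; rewrite -subr_eq0 /zeval /=.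
have -> : (z.1 * w.1 - 2 * z.2 * w.2)%:~R + (z.1 * w.2 + z.2 * w.1 + z.2 * w.2)%:~R * r
    - (z.1%:~R + z.2%:~R * r) * (w.1%:~R + w.2%:~R * r)
    = - ((z.2 * w.2)%:~R * (r ^+ 2 - r + 2)) :> R.
  by rewrite !(intrD, intrM, intrN); ring.
by rewrite root_r mulr0 oppr0.
Qed.

End QuadraticEval.

Section DyadicQuadraticEval.
Variables (F : fieldType) (r : F).
Hypotheses (root_r : r ^+ 2 - r + 2 = 0) (two_neq0 : (2 : F) != 0).

Lemma zeval_int (c : int) : zeval r (c, 0) = c%:~R.
Proof. by rewrite /zeval /= mul0r addr0. Qed.

Lemma zeval_fracD z w k l :
  zeval r z / 2 ^+ k + zeval r w / 2 ^+ l =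
  zeval r (zmul (2 ^+ l, 0) z + zmul (2 ^+ k, 0) w) / 2 ^+ (k + l).
Proof.
rewrite zevalD !zevalM // !zeval_int !rmorphXn /= exprD.
by field; rewrite !expf_neq0.
Qed.

Lemma zeval_fracM z w k l :
  (zeval r z / 2 ^+ k) * (zeval r w / 2 ^+ l) = zeval r (zmul z w) / 2 ^+ (k + l).
Proof. by rewrite zevalM // exprD; field; rewrite !expf_neq0. Qed.

End DyadicQuadraticEval.

Lemma alpha_root : alpha ^+ 2 - alpha + 2 = 0.
Proof.
have s2 : sqrtC (-7 : algC) ^+ 2 = -7 by exact: sqrtCK.
rewrite /alpha; set s := sqrtC _.
have -> : ((1 + s) / 2) ^+ 2 - (1 + s) / 2 + 2 = (s ^+ 2 + 7) / 4 by field.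
by rewrite s2 addNr mul0r.
Qed.

Lemma conj_alpha : alpha^* = 1 - alpha.
Proof.
have s2 : sqrtC (-7 : algC) ^+ 2 = -7 by exact: sqrtCK.
have s_neq0 : sqrtC (-7 : algC) != 0 by rewrite sqrtC_eq0 oppr_eq0 pnatr_eq0.
have conj_s : (sqrtC (-7 : algC))^* = - sqrtC (-7).
  apply: (mulfI s_neq0).
  by rewrite -normCK -normrX s2 normrN normr_nat mulrN -expr2 s2 opprK.
have -> : alpha^* = (1 + (sqrtC (-7))^*) / 2.
  by rewrite /alpha fmorph_div rmorphD rmorph1 rmorph_nat.
by rewrite conj_s /alpha; field.
Qed.

Lemma F7_four_root : (4 : 'F_7) ^+ 2 - 4 + 2 = 0.
Proof. by apply/eqP. Qed.

Lemma zeval_conj z : zeval alpha (zconj z) = (zeval alpha z)^*.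
Proof.
have -> : (zeval alpha z)^* = z.1%:~R + z.2%:~R * alpha^*.
  by rewrite rmorphD rmorphM !rmorph_int.
by rewrite conj_alpha /zeval /= !(intrD, intrN); ring.
Qed.

Lemma dyadic_div_pow2 (n : int) k :
  dyadic (n%:~R / 2 ^+ k) /\ redQ7 (n%:~R / 2 ^+ k) = n%:~R / 2 ^+ k.
Proof.
set q : rat := n%:~R / 2 ^+ k.
have numq_den : numq q * 2 ^+ k = n * denq q.
  apply: (@intr_inj rat); rewrite !rmorphM /= rmorphXn /= numqE /q.
  by field; rewrite expf_neq0.
have [m den_q] : exists m : nat, denq q = (2 ^ m)%:Z.
  have := congr1 absz numq_den; rewrite !abszM abszX /= => abs_eq.
  have : (`|denq q| %| `|numq q| * 2 ^ k)%N by rewrite abs_eq dvdn_mull.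
  rewrite Gauss_dvdr; last by rewrite coprime_sym coprime_num_den.
  case/(dvdn_pfactor _ _ (isT : prime 2)) => m _ hm.
  by exists m; rewrite -absz_denq hm.
split; first by exists m.
have den_neq0 : ((denq q)%:~R : 'F_7) != 0.
  by rewrite den_q -[((2 ^ m)%:Z)%:~R]/((2 ^ m)%:R) natrX expf_neq0.
rewrite /redQ7; apply/eqP; rewrite eqr_div // ?expf_neq0 //.
apply/eqP; have := congr1 (fun z : int => (z%:~R : 'F_7)) numq_den.
by rewrite /= !rmorphM /= rmorphXn.
Qed.

Lemma reduces_to_frac z k : reduces_to (zeval alpha z / 2 ^+ k) (zeval 4 z / 2 ^+ k).
Proof.
have [dy1 red1] := dyadic_div_pow2 z.1 k; have [dy2 red2] := dyadic_div_pow2 z.2 k.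
exists (z.1%:~R / 2 ^+ k), (z.2%:~R / 2 ^+ k); split => //.
  rewrite !fmorph_div !rmorph_int !rmorphXn !rmorph_nat /zeval.
  by field; rewrite expf_neq0 // pnatr_eq0.
by rewrite red1 red2 /zeval; field; rewrite expf_neq0.
Qed.

Lemma reduces_toE x y : reduces_to x y ->
  exists z k, x = zeval alpha z / 2 ^+ k /\ y = zeval 4 z / 2 ^+ k.
Proof.
case=> a [b [[k ha] [l hb] -> ->]].
have pow2E (R : unitRingType) (j : nat) : ((2 ^ j)%:Z)%:~R = 2 ^+ j :> R.
  by rewrite -[((2 ^ j)%:Z)%:~R]/((2 ^ j)%:R) natrX.
have aE : a = (numq a)%:~R / 2 ^+ k by rewrite -[LHS]divq_num_den ha pow2E.
have bE : b = (numq b)%:~R / 2 ^+ l by rewrite -[LHS]divq_num_den hb pow2E.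
exists (numq a * 2 ^+ l, numq b * 2 ^+ k), (k + l)%N; split.
  rewrite [in ratr a]aE [in ratr b]bE !fmorph_div !rmorph_int !rmorphXn !rmorph_nat.
  rewrite /zeval /= !rmorphM /= !rmorphXn /= exprD.
  by field; rewrite !expf_neq0 // pnatr_eq0.
rewrite /redQ7 ha hb /zeval /= !rmorphM /= !rmorphXn /= !pow2E exprD.
by field; rewrite !expf_neq0.
Qed.

Lemma reduces_to0 : reduces_to 0 0.
Proof. by have := reduces_to_frac 0 0; rewrite !zeval0 !mul0r. Qed.

Lemma reduces_toD x y x' y' :
  reduces_to x y -> reduces_to x' y' -> reduces_to (x + x') (y + y').
Proof.
move=> /reduces_toE [z [k [-> ->]]] /reduces_toE [w [l [-> ->]]].
rewrite !zeval_fracD ?alpha_root ?F7_four_root ?pnatr_eq0 //.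
exact: reduces_to_frac.
Qed.

Lemma reduces_toM x y x' y' :
  reduces_to x y -> reduces_to x' y' -> reduces_to (x * x') (y * y').
Proof.
move=> /reduces_toE [z [k [-> ->]]] /reduces_toE [w [l [-> ->]]].
rewrite !zeval_fracM ?alpha_root ?F7_four_root ?pnatr_eq0 //.
exact: reduces_to_frac.
Qed.

Definition liftable (g : 'M['F_7]_3) : Prop :=
  exists gam : 'M[algC]_3,
    (map_mx (fun x => x^*) gam)^T *m gam = 1 /\ forall i j, reduces_to (gam i j) (g i j).

Lemma liftable1 : liftable 1.
Proof.
exists 1; split; first by rewrite map_mx1 trmx1 mulmx1.
move=> i j; rewrite !mxE; case: (i == j) => /=; last exact: reduces_to0.
by have := reduces_to_frac (1, 0) 0; rewrite !zeval_int expr0 !divr1.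
Qed.

Lemma liftable_mul g h : liftable g -> liftable h -> liftable (g *m h).
Proof.
move=> [gam [gam_u gam_red]] [eta [eta_u eta_red]]; exists (gam *m eta); split.
  by rewrite map_mxM trmx_mul -mulmxA (mulmxA _ gam) gam_u mul1mx eta_u.
move=> i j; rewrite !mxE; apply: (big_ind2 reduces_to reduces_to0 (@reduces_toD)).
by move=> k _; apply: reduces_toM.
Qed.

Lemma sum_ord3 (V : nmodType) (F : 'I_3 -> V) : \sum_(k < 3) F k = F 0 + F 1 + F 2.
Proof.
rewrite !big_ord_recl big_ord0 addr0 addrA.
by congr (F _ + F _ + F _); apply/val_inj.
Qed.

(* Matrices over [F_7] are coded by the row-major sequence of their entries, as
   naturals below 7, so that the enumerations below can run under [vm_compute]. *)
Definition mx_of_seq (T : Type) (x0 : T) (s : seq T) : 'M[T]_3 :=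
  \matrix_(i, j) nth x0 s (3 * i + j).

Definition mx_of_code (s : seq nat) : 'M['F_7]_3 := map_mx (fun n => n%:R) (mx_of_seq 0%N s).

(* [S] codes, in row-major order, a matrix [2 gam] over [Z[alpha]]: the first conjunct
   is entry [(i, j)] of [(2 gam)^* (2 gam) = 4], the second says that [gam] reduces to [s]. *)
Definition half_lift_at (S : seq (int * int)) (s : seq nat) (i j : nat) : bool :=
  (zmul (zconj (nth 0 S i)) (nth 0 S j) + zmul (zconj (nth 0 S (3 + i))) (nth 0 S (3 + j))
    + zmul (zconj (nth 0 S (6 + i))) (nth 0 S (6 + j)) == ((i == j)%:Z * 4, 0))
  && (zeval (4 : 'F_7) (nth 0 S (3 * i + j)) == 2 * (nth 0%N s (3 * i + j))%:R).

Definition all_ord3 (P : nat -> nat -> bool) : bool :=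
  all (fun i => all (P i) (iota 0 3)) (iota 0 3).

Lemma all_ord3P P : all_ord3 P -> forall i j : 'I_3, P i j.
Proof.
have ltn3 (k : 'I_3) : (k : nat) \in iota 0 3 by rewrite mem_iota ltn_ord.
by move=> /allP P_all i j; apply: (allP (P_all _ (ltn3 i))).
Qed.

Lemma half_conj_mul z w :
  (zeval alpha z / 2)^* * (zeval alpha w / 2) = zeval alpha (zmul (zconj z) w) / 4.
Proof.
have -> : (zeval alpha z / 2)^* = (zeval alpha z)^* / 2 by rewrite fmorph_div rmorph_nat.
by rewrite -zeval_conj zevalM ?alpha_root //; field.
Qed.

Lemma half_lift_liftable S s : all_ord3 (half_lift_at S s) -> liftable (mx_of_code s).
Proof.
move=> /all_ord3P ok; pose G := mx_of_seq 0 S.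
exists (\matrix_(i, j) (zeval alpha (G i j) / 2)); split.
  apply/matrixP => i j; have /andP [/eqP unit_ij _] := ok i j.
  rewrite !mxE sum_ord3 !mxE !half_conj_mul -!mulrDl -!zevalD unit_ij zeval_int.
  by rewrite intrM mulfK // pnatr_eq0.
move=> i j; have /andP [_ /eqP red_ij] := ok i j.
rewrite !mxE; have := reduces_to_frac (nth 0 S (3 * i + j)) 1.
by rewrite red_ij expr1 mulrAC divff ?mul1r.
Qed.

Definition mul_code (s t : seq nat) : seq nat :=
  mkseq (fun n => let i := (n %/ 3)%N in let j := (n %% 3)%N in
    (nth 0 s (3 * i) * nth 0 t j + nth 0 s (3 * i + 1) * nth 0 t (3 + j)
      + nth 0 s (3 * i + 2) * nth 0 t (6 + j)) %% 7)%N 9.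

Lemma mx_of_code_mul s t : mx_of_code (mul_code s t) = mx_of_code s *m mx_of_code t.
Proof.
apply/matrixP => i j; rewrite !mxE sum_ord3 !mxE.
have ij_lt9 : (3 * i + j < 9)%N by case: i j => [[|[|[|?]]] ?] [[|[|[|?]]] ?].
have i_eq : ((3 * i + j) %/ 3)%N = i by rewrite mulnC divnMDl // divn_small ?addn0.
have j_eq : ((3 * i + j) %% 3)%N = j by rewrite mulnC modnMDl modn_small.
rewrite nth_mkseq //= i_eq j_eq Fp_nat_mod // !natrD !natrM.
by rewrite /= !addn0 !muln0 !muln1 !add0n.
Qed.

Section Closure.
Variables (T : eqType) (mul : T -> T -> T) (gens : seq T).

Fixpoint gen_closure (fuel : nat) (S : seq T) : seq T :=
  if fuel is fuel'.+1 then
    let new := undup [seq x <- [seq mul s g | s <- S, g <- gens] | x \notin S] in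
    if new is [::] then S else gen_closure fuel' (new ++ S)
  else S.

Lemma gen_closure_ind (P : T -> Prop) fuel S :
  {in S, forall s, P s} -> (forall s g, P s -> g \in gens -> P (mul s g)) ->
  {in gen_closure fuel S, forall s, P s}.
Proof.
move=> PS Pmul; elim: fuel S PS => [|fuel IH] S PS //=.
case new_eq: (undup _) => [|x new] //; apply: IH => s.
rewrite mem_cat => /orP [|]; last exact: PS.
rewrite -new_eq mem_undup mem_filter => /andP [_ /allpairsP [[s' g] [/= s'S gG ->]]].
exact: Pmul (PS _ s'S) gG.
Qed.

End Closure.

Definition residues : seq nat := iota 0 7.

Definition triples : seq (seq nat) :=
  [seq a :: bc | a <- residues, bc <- [seq [:: b; c] | b <- residues, c <- residues]].

Definition dot7 (u v : seq nat) : nat :=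
  (nth 0 u 0 * nth 0 v 0 + nth 0 u 1 * nth 0 v 1 + nth 0 u 2 * nth 0 v 2) %% 7.

Definition unit_rows : seq (seq nat) := [seq u <- triples | dot7 u u == 1%N].

(* [if] rather than [==>]: [vm_compute] is call by value, and the membership test
   must only run on orthonormal triples. *)
Definition covers_O3 (S : seq (seq nat)) : bool :=
  all (fun u => all (fun v => all (fun w =>
    if [&& dot7 u v == 0%N, dot7 u w == 0%N & dot7 v w == 0%N] then u ++ v ++ w \in S else true)
  unit_rows) unit_rows) unit_rows.

Definition row_code (g : 'M['F_7]_3) (i : 'I_3) : seq nat :=
  [:: nat_of_ord (g i 0); nat_of_ord (g i 1); nat_of_ord (g i 2)].

Definition code_of_mx (g : 'M['F_7]_3) : seq nat := row_code g 0 ++ row_code g 1 ++ row_code g 2.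

Lemma code_of_mxK g : mx_of_code (code_of_mx g) = g.
Proof.
apply/matrixP => i j; rewrite !mxE.
by case: i j => [[|[|[|?]]] ?] [[|[|[|?]]] ?] //=; rewrite natr_Zp; congr (g _ _); apply/val_inj.
Qed.

Lemma dot7_row_code g h i j : dot7 (row_code g i) (row_code h j) = (g *m h^T) i j.
Proof.
rewrite mxE sum_ord3 !mxE -[g i 0]natr_Zp -[g i 1]natr_Zp -[g i 2]natr_Zp.
rewrite -[h j 0]natr_Zp -[h j 1]natr_Zp -[h j 2]natr_Zp -!natrM -!natrD.
by rewrite val_Fp_nat.
Qed.

Lemma row_code_triples g i : row_code g i \in triples.
Proof.
have res x : nat_of_ord (x : 'F_7) \in residues by rewrite mem_iota ltn_ord.
by apply: allpairs_f (res _) _; apply: allpairs_f.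
Qed.

Lemma covers_O3P S g : covers_O3 S -> g *m g^T = 1 -> code_of_mx g \in S.
Proof.
move=> cover g_orth.
have dot_rows i j : dot7 (row_code g i) (row_code g j) = (i == j) :> nat.
  by rewrite dot7_row_code g_orth mxE; case: (i == j).
have unit_row i : row_code g i \in unit_rows by rewrite mem_filter row_code_triples dot_rows eqxx.
have /allP/(_ _ (unit_row 0))/allP/(_ _ (unit_row 1))/allP/(_ _ (unit_row 2)) := cover.
by rewrite !dot_rows.
Qed.

Definition generators : seq (seq (int * int) * seq nat) := [::
  ([:: (0, 0); (2, 0); (0, 0);  (2, 0); (0, 0); (0, 0);  (0, 0); (0, 0); (2, 0)],
   [:: 0; 1; 0;  1; 0; 0;  0; 0; 1]%N);
  ([:: (2, 0); (0, 0); (0, 0);  (0, 0); (0, 0); (2, 0);  (0, 0); (2, 0); (0, 0)],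
   [:: 1; 0; 0;  0; 0; 1;  0; 1; 0]%N);
  ([:: (-2, 0); (0, 0); (0, 0);  (0, 0); (2, 0); (0, 0);  (0, 0); (0, 0); (2, 0)],
   [:: 6; 0; 0;  0; 1; 0;  0; 0; 1]%N);
  ([:: (0, 1); (1, -1); (0, 0);  (0, -1); (1, -1); (0, 0);  (0, 0); (0, 0); (2, 0)],
   [:: 2; 2; 0;  5; 2; 0;  0; 0; 1]%N)].

Lemma generators_half_lift : all (fun p => all_ord3 (half_lift_at p.1 p.2)) generators.
Proof. by vm_compute. Qed.

Definition id_code : seq nat := [:: 1; 0; 0;  0; 1; 0;  0; 0; 1]%N.

Lemma mx_of_id_code : mx_of_code id_code = 1.
Proof. by apply/matrixP => i j; rewrite !mxE; case: i j => [[|[|[|?]]] ?] [[|[|[|?]]] ?]. Qed.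

(* 30 rounds suffice: the orbit stabilises at the 672 elements of [O_3(7)]. *)
Definition O3_7_codes : seq (seq nat) := gen_closure mul_code (map snd generators) 30 [:: id_code].

Lemma O3_7_codes_liftable : {in O3_7_codes, forall s, liftable (mx_of_code s)}.
Proof.
apply: gen_closure_ind => [s|s _ lift_s /mapP [p p_gen ->]].
  by rewrite inE => /eqP ->; rewrite mx_of_id_code; exact: liftable1.
rewrite mx_of_code_mul; apply: liftable_mul lift_s _; apply: half_lift_liftable.
exact: (allP generators_half_lift).
Qed.

Lemma covers_O3_7_codes : covers_O3 O3_7_codes.
Proof. by vm_compute. Qed.

Theorem lemma2p2 :
  forall g : 'M['F_7]_3, O3_7 g ->
  exists (gam : 'M[algC]_3) (c : 'F_7),
    [/\ Gamma_L gam, c != 0 & forall i j, reduces_to (gam i j) (c * g i j)].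
Proof.
move=> g /mulmx1C g_orth.
have [gam [gam_unitary gam_red]] : liftable g.
  rewrite -(code_of_mxK g); apply: O3_7_codes_liftable.
  exact: covers_O3P covers_O3_7_codes g_orth.
exists gam, 1; split => // [|i j]; last by rewrite mul1r.
split=> // i j; have [a [b [dy_a dy_b gam_ij _]]] := gam_red i j.
by exists a, b.
Qed.
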